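(* Let $L\ge 1$ be an integer, let $\sigma^2>0$, and let $\bm{a}:[-1,1]\times[-1,1]\to\mathbb{C}^L$ be a function satisfying $\|\bm{a}(\omega,\mu)\|^2=L$ for all $(\omega,\mu)$. For parameters $x>0$, $\lambda\in[0,1]$, $(\omega,\mu)\in[-1,1]^2$ and $\psi\in[0,2\pi)$, consider the complex Gaussian density on $\mathbb{C}^L$ $$f(\bm{y}\mid x,\lambda,\omega,\mu,\psi)=\frac{1}{(\pi\epsilon^2)^L}\exp\!\Big(-\frac{\|\bm{y}-x\lambda\,\bm{a}(\omega,\mu)e^{\mathrm{j}\psi}\|^2}{\epsilon^2}\Big),\qquad \epsilon^2=x^2(1-\lambda^2)+\sigma^2,$$ i.e. the density of $\mathcal{CN}\big(x\lambda\bm{a}(\omega,\mu)e^{\mathrm{j}\psi},\,\epsilon^2\bm{I}_L\big)$. Fix an observation $\bm{y}\in\mathbb{C}^L$ and write $\bar{\bm{y}}=\bm{y}/\sqrt{L}$ and $\bar{\bm{a}}(\omega,\mu)=\bm{a}(\omega,\mu)/\sqrt{L}$. Let $(\omega_1^*,\mu_1^* )$ be a maximizer of $(\omega,\mu)\mapsto|\bar{\bm{y}}^H\bar{\bm{a}}(\omega,\mu)|^2$ over $[-1,1]^2$, assume $\bar{\bm{y}}^H\bar{\bm{a}}(\omega_1^*,\mu_1^* )\neq 0$, and set $\Xi^*=\|\bar{\bm{y}}\|^2-|\bar{\bm{y}}^H\bar{\bm{a}}(\omega_1^*,\mu_1^* )|^2-\sigma^2$. Define $x_1^*>0$, $\lambda_1^*\in[0,1]$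 and $\psi^*$ by $$(x_1^* )^2=\begin{cases}\|\bar{\bm{y}}\|^2-\sigma^2,&\Xi^*\ge 0,\\ |\bar{\bm{y}}^H\bar{\bm{a}}(\omega_1^*,\mu_1^* )|^2,&\Xi^*<0,\end{cases}\qquad (\lambda_1^* )^2=\begin{cases}\dfrac{|\bar{\bm{y}}^H\bar{\bm{a}}(\omega_1^*,\mu_1^* )|^2}{\|\bar{\bm{y}}\|^2-\sigma^2},&\Xi^*\ge 0,\\ 1,&\Xi^*<0,\end{cases}$$ $$e^{-\mathrm{j}\psi^*}=\frac{\bar{\bm{y}}^H\bar{\bm{a}}(\omega_1^*,\mu_1^* )}{|\bar{\bm{y}}^H\bar{\bm{a}}(\omega_1^*,\mu_1^* )|}.$$ Then $(x_1^*,\lambda_1^*,\omega_1^*,\mu_1^*,\psi^* )$ maximizes $\ln f(\bm{y}\mid x,\lambda,\omega,\mu,\psi)$ over all $x>0$, $\lambda\in[0,1]$, $(\omega,\mu)\in[-1,1]^2$, $\psi\in[0,2\pi)$.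
   Context: This is the maximum-likelihood estimation of the unknown parameters of a ground-to-air Rician channel under the hypothesis that the received (matched-filtered) training signal comes from an unknown attacker: $\bm{y}=x\,(\lambda\bm{a}(\omega,\mu)+\sqrt{1-\lambda^2}\,\bm{h})e^{\mathrm{j}\psi}+\bm{n}$ with $\bm{h}\sim\mathcal{CN}(\bm{0},\bm{I}_L)$ and $\bm{n}\sim\mathcal{CN}(\bm{0},\sigma^2\bm{I}_L)$ independent, which gives the density above. Here $\bm{a}(\omega,\mu)$ is the array steering vector, $\lambda=\sqrt{1/(1+\kappa)}$ with $\kappa$ the Rician factor, $x$ is the received amplitude, $\psi$ a phase rotation, and $(\cdot)^H$ denotes conjugate transpose. *)

From HB Require Import structures.
From mathcomp Require Import all_boot all_order all_algebra.
From mathcomp Require Import complex.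
Import ComplexField.Normc.
From mathcomp Require Import reals.
From mathcomp.analysis Require Import sequences exp trigo.
Set Implicit Arguments. Unset Strict Implicit. Unset Printing Implicit Defensive.
Import Order.TTheory GRing.Theory Num.Theory.
Local Open Scope ring_scope.
Local Open Scope complex_scope.

Section Defs.
Variables (R : realType) (L : nat).

Definition cdot (u v : 'cV[R[i]]_L) : R[i] := \sum_(k < L) (u k 0)^* * v k 0.

Definition vnorm2 (u : 'cV[R[i]]_L) : R := \sum_(k < L) normc (u k 0) ^+ 2.

Definition expj (psi : R) : R[i] := Complex (cos psi) (sin psi).

Definition eps2 (sigma2 x lam : R) : R := x ^+ 2 * (1 - lam ^+ 2) + sigma2.

Definition fdens (sigma2 : R) (a : R -> R -> 'cV[R[i]]_L) (y : 'cV[R[i]]_L)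
    (x lam om mu psi : R) : R :=
  ((pi * eps2 sigma2 x lam) ^+ L)^-1 *
  expR (- (vnorm2 (y - (((x * lam)%:C * expj psi) *: a om mu)))
          / eps2 sigma2 x lam).

Definition nrmz (u : 'cV[R[i]]_L) : 'cV[R[i]]_L := ((Num.sqrt (L%:R : R))^-1)%:C *: u.

Definition Xistar (sigma2 : R) (a : R -> R -> 'cV[R[i]]_L) (y : 'cV[R[i]]_L) (om1 mu1 : R) : R :=
  vnorm2 (nrmz y) - normc (cdot (nrmz y) (nrmz (a om1 mu1))) ^+ 2 - sigma2.

Definition xstar (sigma2 : R) (a : R -> R -> 'cV[R[i]]_L) (y : 'cV[R[i]]_L) (om1 mu1 : R) : R :=
  if 0 <= Xistar sigma2 a y om1 mu1
  then Num.sqrt (vnorm2 (nrmz y) - sigma2)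
  else Num.sqrt (normc (cdot (nrmz y) (nrmz (a om1 mu1))) ^+ 2).

Definition lamstar (sigma2 : R) (a : R -> R -> 'cV[R[i]]_L) (y : 'cV[R[i]]_L) (om1 mu1 : R) : R :=
  if 0 <= Xistar sigma2 a y om1 mu1
  then Num.sqrt (normc (cdot (nrmz y) (nrmz (a om1 mu1))) ^+ 2 / (vnorm2 (nrmz y) - sigma2))
  else 1.

End Defs.

From HB Require Import structures.
From mathcomp Require Import all_boot all_order all_algebra.
From mathcomp Require Import complex.
Import ComplexField.Normc.
From mathcomp Require Import reals.
From mathcomp.analysis Require Import sequences exp trigo.
From mathcomp Require Import ring lra.
Set Implicit Arguments. Unset Strict Implicit. Unset Printing Implicit Defensive.
Import Order.TTheory GRing.Theory Num.Theory.
Local Open Scope ring_scope.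
Local Open Scope complex_scope.

(* With [u = x lam], [c = ybar^H abar(om, mu)] and [e = eps^2], expanding the
   square gives
     ln f = - L ln pi - L (ln e + (||ybar||^2 - 2 u Re(e^{j psi} c) + u^2) / e).
   Since [Re(e^{j psi} c) <= |c| <= r := |ybar^H abar(om1, mu1)|] and
   [u^2 - 2 u r >= - r^2], the numerator is at least [D := ||ybar||^2 - r^2],
   with equality at [u = r], [psi = psi^*], [(om, mu) = (om1, mu1)].  What is
   left is to minimise [e |-> ln e + D / e] over [e >= sigma^2] (because
   [eps^2 >= sigma^2]); its minimum is at [e = max(sigma^2, D)], and the
   starred parameters realise exactly [u = r] and [eps^2 = max(sigma^2, D)]. *)

Section ComplexFacts.
Variable R : rcfType.

Lemma sqr_normcE (z : R[i]) :
  normc z ^+ 2 = complex.Re z ^+ 2 + complex.Im z ^+ 2.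
Proof. by case: z => a b /=; rewrite sqr_sqrtr // addr_ge0 // sqr_ge0. Qed.

Lemma sqr_normcB_mul (p s q : R[i]) : normc (p - s * q) ^+ 2 =
  normc p ^+ 2 - 2 * complex.Re (s * (p^* * q)) + normc s ^+ 2 * normc q ^+ 2.
Proof.
by rewrite !sqr_normcE; case: p => ? ?; case: s => ? ?; case: q => ? ? /=; ring.
Qed.

Lemma normc_real (r : R) : normc r%:C = `|r|.
Proof. by rewrite /normc /= expr0n addr0 sqrtr_sqr. Qed.

Lemma Re_realM (r : R) (z : R[i]) : complex.Re (r%:C * z) = r * complex.Re z.
Proof. by case: z => ? ? /=; ring. Qed.

Lemma normc_ge0 (z : R[i]) : 0 <= normc z.
Proof. by case: z => ? ?; exact: sqrtr_ge0. Qed.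

Lemma Re_le_normc (z : R[i]) : complex.Re z <= normc z.
Proof.
case: z => a b; rewrite /normc /=; apply: le_trans (ler_norm a) _.
by rewrite -sqrtr_sqr ler_sqrt ?lerDl ?sqr_ge0 // addr_ge0 ?sqr_ge0.
Qed.

End ComplexFacts.

Section ComplexExponential.
Variable R : realType.

Lemma normc_expj (psi : R) : normc (expj psi) = 1.
Proof. by rewrite /normc /= cos2Dsin2 sqrtr1. Qed.

Lemma expj_mul_expjN (psi : R) : expj psi * expj (- psi) = 1.
Proof.
rewrite /expj cosN sinN; apply/eqP; rewrite eq_complex /= -(cos2Dsin2 psi).
by apply/andP; split; apply/eqP; ring.
Qed.

End ComplexExponential.

Section Vectors.
Variables (R : realType) (L : nat).
Implicit Types (u v : 'cV[R[i]]_L) (r : R).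

Lemma Re_sum (F : 'I_L -> R[i]) :
  complex.Re (\sum_(k < L) F k) = \sum_(k < L) complex.Re (F k).
Proof. exact: (raddf_sum (@complex.Re R : Rcomplex R -> R)). Qed.

Lemma vnorm2_subZ u v (s : R[i]) :
  vnorm2 (u - s *: v) =
  vnorm2 u - 2 * complex.Re (s * cdot u v) + normc s ^+ 2 * vnorm2 v.
Proof.
rewrite /vnorm2 /cdot mulr_sumr Re_sum !mulr_sumr -sumrB -big_split /=.
by apply: eq_bigr => k _; rewrite !mxE sqr_normcB_mul.
Qed.

Lemma vnorm2_realZ r u : vnorm2 (r%:C *: u) = r ^+ 2 * vnorm2 u.
Proof.
rewrite /vnorm2 mulr_sumr; apply: eq_bigr => k _.
by rewrite mxE normcM normc_real exprMn real_normK ?num_real.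
Qed.

Lemma cdot_realZ r u v : cdot (r%:C *: u) (r%:C *: v) = (r ^+ 2)%:C * cdot u v.
Proof.
rewrite /cdot mulr_sumr; apply: eq_bigr => k _; rewrite !mxE.
by case: (u k 0) => ? ?; case: (v k 0) => ? ? /=; congr Complex; ring.
Qed.

Hypothesis L_gt0 : (0 < L)%N.

Lemma nrmzK u : (Num.sqrt (L%:R : R))%:C *: nrmz u = u.
Proof.
have sqrtL_neq0 : Num.sqrt (L%:R : R) != 0 by rewrite gt_eqF // sqrtr_gt0 ltr0n.
by rewrite /nrmz scalerA -rmorphM /= divff // scale1r.
Qed.

Lemma sqr_sqrtL : Num.sqrt (L%:R : R) ^+ 2 = L%:R.
Proof. by rewrite sqr_sqrtr // ler0n. Qed.

Lemma vnorm2_nrmz u : vnorm2 u = L%:R * vnorm2 (nrmz u).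
Proof. by rewrite -{1}(nrmzK u) vnorm2_realZ sqr_sqrtL. Qed.

Lemma cdot_nrmz u v : cdot u v = (L%:R)%:C * cdot (nrmz u) (nrmz v).
Proof. by rewrite -{1}(nrmzK u) -{1}(nrmzK v) cdot_realZ sqr_sqrtL. Qed.

End Vectors.

Section LogDensity.
Variables (R : realType) (L : nat) (sigma2 : R).
Variables (a : R -> R -> 'cV[R[i]]_L) (y : 'cV[R[i]]_L).

Lemma sigma2_le_eps2 x lam : 0 <= lam <= 1 -> sigma2 <= eps2 sigma2 x lam.
Proof. by move=> lam01; rewrite /eps2 lerDr mulr_ge0 ?sqr_ge0 //; nra. Qed.

Lemma ln_fdens x lam om mu psi :
  (0 < L)%N -> vnorm2 (a om mu) = L%:R -> 0 < eps2 sigma2 x lam ->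
  ln (fdens sigma2 a y x lam om mu psi) =
  - (L%:R * ln pi) - L%:R * (ln (eps2 sigma2 x lam) +
     (vnorm2 (nrmz y)
      - 2 * (x * lam) * complex.Re (expj psi * cdot (nrmz y) (nrmz (a om mu)))
      + (x * lam) ^+ 2) / eps2 sigma2 x lam).
Proof.
move=> L_gt0 a_norm e_gt0; set e := eps2 sigma2 x lam.
have pie_gt0 : 0 < pi * e by rewrite mulr_gt0 // pi_gt0.
rewrite /fdens lnM ?posrE ?invr_gt0 ?exprn_gt0 ?expR_gt0 //.
rewrite lnV ?posrE ?exprn_gt0 // lnXn // expRK lnM ?posrE ?pi_gt0 //.
have normc_scale : normc ((x * lam)%:C * expj psi) ^+ 2 = (x * lam) ^+ 2.
  by rewrite normcM normc_expj mulr1 normc_real real_normK ?num_real.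
rewrite vnorm2_subZ normc_scale a_norm (vnorm2_nrmz L_gt0) (cdot_nrmz L_gt0).
rewrite mulrCA Re_realM -[_ * expj psi * _]mulrA Re_realM -mulr_natl /e.
ring.
Qed.

End LogDensity.

Section Profile.
Variable R : realType.

Lemma ln_le_subr1 (t : R) : 0 < t -> ln t <= t - 1.
Proof.
move=> t_gt0; have := @le_ln1Dx R (t - 1).
by rewrite addrCA subrr addr0; apply; lra.
Qed.

Definition profile (D e : R) : R := ln e + D / e.

Lemma profile_min_at_D (D e : R) : 0 < D -> 0 < e -> profile D D <= profile D e.
Proof.
move=> D_gt0 e_gt0; rewrite /profile divff ?gt_eqF //.
by have := ln_le_subr1 (divr_gt0 D_gt0 e_gt0); rewrite ln_div ?posrE //; lra.
Qed.

Lemma profile_min_at_bound (s D e : R) : 0 < s -> s <= e -> D < s ->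
  profile D s <= profile D e.
Proof.
move=> s_gt0 s_le_e D_lt_s; have e_gt0 : 0 < e by lra.
have := ln_le_subr1 (divr_gt0 s_gt0 e_gt0); rewrite ln_div ?posrE // => ln_se.
have : 0 <= (s - D) * (e - s) / (e * s).
  by rewrite divr_ge0 ?mulr_ge0 //; lra.
have -> : (s - D) * (e - s) / (e * s) = D / e - D / s - (s / e - 1).
  by field; rewrite ?gt_eqF.
rewrite /profile; lra.
Qed.

Lemma profile_min (s D e : R) : 0 < s -> s <= e ->
  profile D (Num.max s D) <= profile D e.
Proof.
move=> s_gt0 s_le_e; have [D_lt_s|s_le_D] := ltP D s.
- exact: profile_min_at_bound.
- by apply: profile_min_at_D; lra.
Qed.

End Profile.

Section MaximumLikelihood.
Variables (R : realType) (L : nat) (sigma2 : R).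
Variables (a : R -> R -> 'cV[R[i]]_L) (y : 'cV[R[i]]_L) (om1 mu1 psis : R).

Local Notation c om mu := (cdot (nrmz y) (nrmz (a om mu))).
Local Notation r := (normc (c om1 mu1)).
Local Notation D := (vnorm2 (nrmz y) - r ^+ 2).
Local Notation xs := (xstar sigma2 a y om1 mu1).
Local Notation ls := (lamstar sigma2 a y om1 mu1).
Local Notation loglik_bound e := (- (L%:R * ln pi) - L%:R * profile D e).

Hypothesis L_gt0 : (0 < L)%N.
Hypothesis sigma2_gt0 : 0 < sigma2.
Hypothesis a_norm : forall om mu, -1 <= om <= 1 -> -1 <= mu <= 1 ->
  vnorm2 (a om mu) = L%:R.
Hypotheses (om1_range : -1 <= om1 <= 1) (mu1_range : -1 <= mu1 <= 1).
Hypothesis c_max : forall om mu, -1 <= om <= 1 -> -1 <= mu <= 1 ->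
  normc (c om mu) ^+ 2 <= r ^+ 2.
Hypothesis c1_neq0 : c om1 mu1 != 0.
Hypothesis expj_psis : expj (- psis) = c om1 mu1 / r%:C.

Lemma r_gt0 : 0 < r.
Proof.
by rewrite lt_def normc_ge0 andbT; apply: contra c1_neq0 => /eqP/eq0_normc ->.
Qed.

Lemma Re_expj_cdot_le om mu psi : -1 <= om <= 1 -> -1 <= mu <= 1 ->
  complex.Re (expj psi * c om mu) <= r.
Proof.
move=> om_range mu_range; apply: le_trans (Re_le_normc _) _.
rewrite normcM normc_expj mul1r -(@ler_pXn2r _ 2) ?nnegrE ?normc_ge0 //.
exact: c_max.
Qed.

Lemma Re_expj_cdot_star : complex.Re (expj psis * c om1 mu1) = r.
Proof.
have rC_neq0 : r%:C != 0 by rewrite eq_complex /= negb_and gt_eqF ?r_gt0.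
by rewrite -{1}(divfK rC_neq0 (c om1 mu1)) -expj_psis mulrA expj_mul_expjN mul1r.
Qed.

Lemma ln_fdens_le x lam om mu psi :
  0 < x -> 0 <= lam <= 1 -> -1 <= om <= 1 -> -1 <= mu <= 1 ->
  ln (fdens sigma2 a y x lam om mu psi) <= loglik_bound (eps2 sigma2 x lam).
Proof.
move=> x_gt0 lam01 om_range mu_range.
have e_gt0 := lt_le_trans sigma2_gt0 (sigma2_le_eps2 sigma2 x lam01).
rewrite ln_fdens ?a_norm // /profile lerD2l lerN2 ler_pM2l ?ltr0n //.
rewrite lerD2l ler_pM2r ?invr_gt0 //.
have u_ge0 : 0 <= x * lam.
  by case/andP: lam01 => lam_ge0 _; exact: mulr_ge0 (ltW x_gt0) lam_ge0.
move: u_ge0 (Re_expj_cdot_le psi om_range mu_range).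
set u := x * lam; set w := complex.Re _ => u_ge0 w_le_r.
have : 0 <= u * (r - w) by rewrite mulr_ge0 // subr_ge0.
have := sqr_ge0 (u - r); nra.
Qed.

Lemma xstar_gt0 : 0 < xs.
Proof.
have r2_gt0 : 0 < r ^+ 2 := exprn_gt0 2 r_gt0.
by rewrite /xstar /Xistar; case: ifP => D_ge; rewrite sqrtr_gt0 //; lra.
Qed.

Lemma lamstar_in01 : 0 <= ls <= 1.
Proof.
rewrite /lamstar /Xistar; case: ifP => D_ge; last by rewrite ler01 lexx.
have r2_gt0 : 0 < r ^+ 2 := exprn_gt0 2 r_gt0.
rewrite sqrtr_ge0 -sqrtr1 ler_sqrt ?ler01 // ler_pdivrMr ?mul1r; lra.
Qed.

Lemma xstar_lamstar : xs * ls = r.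
Proof.
have r_ge0 := ltW r_gt0; rewrite /xstar /lamstar /Xistar.
case: ifP => D_ge; last by rewrite mulr1 sqrtr_sqr ger0_norm.
have r2_gt0 : 0 < r ^+ 2 := exprn_gt0 2 r_gt0.
rewrite -sqrtrM; last lra.
by rewrite mulrC divfK ?sqrtr_sqr ?ger0_norm // gt_eqF //; lra.
Qed.

Lemma eps2_star : eps2 sigma2 xs ls = Num.max sigma2 D.
Proof.
move: xstar_lamstar; rewrite /eps2 /xstar /lamstar /Xistar.
case: ifP => D_ge xsls; last first.
  by rewrite expr1n subrr mulr0 add0r max_l //; lra.
have r2_gt0 : 0 < r ^+ 2 := exprn_gt0 2 r_gt0.
rewrite max_r; last lra.
rewrite mulrBr mulr1 -exprMn xsls sqr_sqrtr; lra.
Qed.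

Lemma ln_fdens_star : ln (fdens sigma2 a y xs ls om1 mu1 psis) =
  loglik_bound (Num.max sigma2 D).
Proof.
have e_gt0 : 0 < Num.max sigma2 D by rewrite lt_max sigma2_gt0.
rewrite ln_fdens ?a_norm ?eps2_star // xstar_lamstar Re_expj_cdot_star.
by rewrite /profile; congr (_ - _ * (_ + _ / _)); ring.
Qed.

Lemma ln_fdens_le_star x lam om mu psi :
  0 < x -> 0 <= lam <= 1 -> -1 <= om <= 1 -> -1 <= mu <= 1 ->
  ln (fdens sigma2 a y x lam om mu psi)
    <= ln (fdens sigma2 a y xs ls om1 mu1 psis).
Proof.
move=> x_gt0 lam01 om_range mu_range; rewrite ln_fdens_star.
apply: le_trans (ln_fdens_le psi x_gt0 lam01 om_range mu_range) _.
rewrite lerD2l lerN2 ler_pM2l ?ltr0n //.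
exact: profile_min sigma2_gt0 (sigma2_le_eps2 sigma2 x lam01).
Qed.

End MaximumLikelihood.

Unset Implicit Arguments.

Theorem theorem1 (R : realType) (L : nat) (sigma2 : R)
    (a : R -> R -> 'cV[R[i]]_L) (y : 'cV[R[i]]_L) (om1 mu1 psis : R) :
  (0 < L)%N ->
  0 < sigma2 ->
  (forall om mu, -1 <= om <= 1 -> -1 <= mu <= 1 -> vnorm2 (a om mu) = L%:R) ->
  (* (om1, mu1) maximizes |ybar^H abar(om,mu)|^2 over [-1,1]^2 *)
  -1 <= om1 <= 1 -> -1 <= mu1 <= 1 ->
  (forall om mu, -1 <= om <= 1 -> -1 <= mu <= 1 ->
     normc (cdot (nrmz y) (nrmz (a om mu))) ^+ 2
       <= normc (cdot (nrmz y) (nrmz (a om1 mu1))) ^+ 2) ->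
  cdot (nrmz y) (nrmz (a om1 mu1)) != 0 ->
  (* psi^* : e^{-j psi^*} = ybar^H abar / |ybar^H abar|, psi^* in [0, 2 pi) *)
  0 <= psis < 2 * pi ->
  expj (- psis) = cdot (nrmz y) (nrmz (a om1 mu1))
                    / (normc (cdot (nrmz y) (nrmz (a om1 mu1))))%:C ->
  [/\ 0 < xstar sigma2 a y om1 mu1,
      0 <= lamstar sigma2 a y om1 mu1 <= 1 &
      forall x lam om mu psi,
        0 < x -> 0 <= lam <= 1 -> -1 <= om <= 1 -> -1 <= mu <= 1 ->
        0 <= psi < 2 * pi ->
        ln (fdens sigma2 a y x lam om mu psi)
          <= ln (fdens sigma2 a y (xstar sigma2 a y om1 mu1)
                   (lamstar sigma2 a y om1 mu1) om1 mu1 psis)].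
Proof.
move=> L_gt0 sigma2_gt0 a_norm om1_range mu1_range c_max c1_neq0 _ expj_psis.
split.
- exact: xstar_gt0.
- exact: lamstar_in01.
- by move=> x lam om mu psi x_gt0 lam01 om_range mu_range _;
    exact: ln_fdens_le_star.
Qed.
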